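(* Let $1\le n\le m$ and, for each unit vector $\mathbf{k}\in S^2\subset\mathbb{R}^3$, let $Q(\mathbf{k})$ be a real $n\times m$ matrix and $R(\mathbf{k})$ a real $m\times n$ matrix, both depending smoothly on $\mathbf{k}$. Define the $(n+m)\times(n+m)$ matrix $$P(\mathbf{k})=\begin{pmatrix}0 & Q(\mathbf{k})\\ R(\mathbf{k}) & 0\end{pmatrix}$$ and the $n\times n$ matrix $M(\mathbf{k}):=Q(\mathbf{k})R(\mathbf{k})$. (a) Fix $\mathbf{k}$. If $M(\mathbf{k})$ is diagonalizable and all its eigenvalues $0<\mu_1<\mu_2<\dots<\mu_l$ are strictly positive, then $P(\mathbf{k})$ is diagonalizable and all its eigenvalues are real and belong to the set $\{0\}\cup\{\pm\sqrt{\mu_j}: j=1,\dots,l\}$. (b) Suppose there exists a family of real symmetric positive-definite $n\times n$ matrices $H_1(\mathbf{k})$, depending smoothly on $\mathbf{k}\in S^2$, such that for all $\mathbf{k}\in S^2$ the matrix $H_1(\mathbf{k})M(\mathbf{k})$ is symmetric (i.e. $H_1(\mathbf{k})M(\mathbf{k})=M(\mathbf{k})^TH_1(\mathbf{k})$) and positive definite. Then there exists a family of real symmetric positive-definite $(n+m)\times(n+m)$ matrices $H(\mathbf{k})$, depending smoothly on $\mathbf{k}\in S^2$, such that $H(\mathbf{k})P(\mathbf{k})=P(\mathbf{k})^TH(\mathbf{k})$ for all $\mathbf{k}\in S^2$ (so that $P$ is strongly hyperbolic in the sense defined in the context).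
   Context: A family of matrices $P(\mathbf{k})$, $\mathbf{k}\in S^2$, is called strongly hyperbolic if there exists a family of symmetric positive-definite matrices $H(\mathbf{k})$ depending smoothly on $\mathbf{k}\in S^2$ such that $H(\mathbf{k})P(\mathbf{k})=P(\mathbf{k})^TH(\mathbf{k})$ for all $\mathbf{k}\in S^2$; if $H$ can be chosen independent of $\mathbf{k}$, it is called symmetric hyperbolic. *)

From Stdlib Require Import Reals Lra.
Open Scope R_scope.

Definition R3 : Type := (R * R * R)%type.
Definition c1 (x : R3) : R := fst (fst x).
Definition c2 (x : R3) : R := snd (fst x).
Definition c3 (x : R3) : R := snd x.

Definition S2 (x : R3) : Prop := c1 x ^ 2 + c2 x ^ 2 + c3 x ^ 2 = 1.

(* sup-norm distance (induces the usual topology of R^3) *)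
Definition dist3 (x y : R3) : R :=
  Rmax (Rabs (c1 x - c1 y)) (Rmax (Rabs (c2 x - c2 y)) (Rabs (c3 x - c3 y))).

Definition open3 (U : R3 -> Prop) : Prop :=
  forall x, U x -> exists r, 0 < r /\ forall y, dist3 x y < r -> U y.

Definition continuous_on3 (U : R3 -> Prop) (f : R3 -> R) : Prop :=
  forall x, U x -> forall eps, 0 < eps ->
    exists delta, 0 < delta /\
      forall y, U y -> dist3 x y < delta -> Rabs (f y - f x) < eps.

Definition shift3 (i : nat) (x : R3) (t : R) : R3 :=
  match i with
  | O => (c1 x + t, c2 x, c3 x)
  | S O => (c1 x, c2 x + t, c3 x)
  | _ => (c1 x, c2 x, c3 x + t)
  end.

Fixpoint Ck (k : nat) (U : R3 -> Prop) (f : R3 -> R) : Prop :=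
  match k with
  | O => continuous_on3 U f
  | S k' => continuous_on3 U f /\
      exists df : nat -> R3 -> R,
        (forall i x, (i < 3)%nat -> U x ->
           derivable_pt_lim (fun t => f (shift3 i x t)) 0 (df i x)) /\
        (forall i, (i < 3)%nat -> Ck k' U (df i))
  end.

Definition smooth_on (U : R3 -> Prop) (f : R3 -> R) : Prop :=
  forall k, Ck k U f.

(* A function on S^2 (represented by any f : R3 -> R, only values on S^2
   matter) is smooth iff it is the restriction of a smooth function defined
   on an open neighbourhood of S^2. *)
Definition smooth_S2 (f : R3 -> R) : Prop :=
  exists (U : R3 -> Prop) (g : R3 -> R),
    open3 U /\ (forall x, S2 x -> U x) /\ smooth_on U g /\
    (forall x, S2 x -> g x = f x).

(* A matrix is nat -> nat -> R; its dimensions are tracked externally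
   and only entries with indices in range are ever meaningful. *)
Definition mat : Type := nat -> nat -> R.

Fixpoint rsum (n : nat) (f : nat -> R) : R :=
  match n with
  | O => 0
  | S n' => rsum n' f + f n'
  end.

Definition mmul (p : nat) (A B : mat) : mat :=
  fun i j => rsum p (fun k => A i k * B k j).

Definition mtr (A : mat) : mat := fun i j => A j i.

Definition idm : mat := fun i j => if Nat.eqb i j then 1 else 0.

Definition diagm (d : nat -> R) : mat := fun i j => if Nat.eqb i j then d i else 0.

Definition mat_eq (r c : nat) (A B : mat) : Prop :=
  forall i j, (i < r)%nat -> (j < c)%nat -> A i j = B i j.

Definition invertible (N : nat) (S : mat) : Prop :=
  exists T : mat, mat_eq N N (mmul N S T) idm /\ mat_eq N N (mmul N T S) idm.

(* A (N x N) is diagonalized as A = S diag(d) S^-1, i.e. A S = S diag(d),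
   S invertible; then d 0, ..., d (N-1) are the eigenvalues of A. *)
Definition diagonalizes (N : nat) (A S : mat) (d : nat -> R) : Prop :=
  invertible N S /\ mat_eq N N (mmul N A S) (mmul N S (diagm d)).

Definition symmetric (N : nat) (A : mat) : Prop :=
  forall i j, (i < N)%nat -> (j < N)%nat -> A i j = A j i.

Definition pos_def (N : nat) (A : mat) : Prop :=
  forall x : nat -> R, (exists i, (i < N)%nat /\ x i <> 0) ->
    0 < rsum N (fun i => x i * rsum N (fun j => A i j * x j)).

Definition sym_pos_def (N : nat) (A : mat) : Prop :=
  symmetric N A /\ pos_def N A.

Definition smooth_mat (r c : nat) (F : R3 -> mat) : Prop :=
  forall i j, (i < r)%nat -> (j < c)%nat -> smooth_S2 (fun k => F k i j).

(* block matrix P = [[0, Q], [R, 0]] of size (n+m) x (n+m),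
   Q : n x m, R : m x n *)
Definition blockP (n : nat) (Q R' : mat) : mat :=
  fun i j =>
    if Nat.ltb i n then
      (if Nat.ltb j n then 0 else Q i (j - n)%nat)
    else
      (if Nat.ltb j n then R' (i - n)%nat j else 0).

(* (a) If M = QR is diagonalizable, its minimal polynomial is
       prod_x (X - x) over its distinct eigenvalues x, so prod_x (QR - x) = 0.
       As P^2 = diag(QR, RQ) and Q (RQ - x) = (QR - x) Q, the polynomial
       X prod_x (X^2 - x) = X prod_x (X - sqrt x)(X + sqrt x) annihilates P.
       When all x > 0 its roots 0, +-sqrt x are pairwise distinct, so P is
       diagonalizable with eigenvalues among them.
   (b) Let C = det(M) I - R adj(M) Q, a multiple of the projection onto ker Q
       along im R which is polynomial in the entries of Q and R.  Then
       H = diag(H1 M, Q^T H1 Q + C^T C) symmetrizes P because C R = 0, and is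
       positive definite because C acts as det(M) <> 0 on ker Q.  Its entries
       are polynomials in those of Q, R, H1, hence smooth on S^2, since smooth
       functions on S^2 form a ring. *)

Set Warnings "-notation-overridden,-ambiguous-paths".
From Pilot Require Import Defs.
From Stdlib Require Import Reals Lra Psatz.
From mathcomp Require Import all_boot all_algebra.
From mathcomp Require Import Rstruct.
Import mathcomp.order.order.Order.TTheory GRing.Theory Num.Theory.

Open Scope R_scope.

Lemma shift3_0 i x : shift3 i x 0 = x.
Proof. by case: x => [[a b] c]; case: i => [|[|i]]; rewrite /= Rplus_0_r. Qed.

Lemma continuous_on3_const U a : continuous_on3 U (fun _ => a).
Proof.
move=> x _ eps Heps; exists 1; split; first lra.
by move=> y _ _; rewrite Rminus_diag Rabs_R0.
Qed.

Lemma continuous_on3_both {U f g x} eps1 eps2 : U x -> 0 < eps1 -> 0 < eps2 ->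
  continuous_on3 U f -> continuous_on3 U g ->
  exists delta, 0 < delta /\ forall y, U y -> dist3 x y < delta ->
    Rabs (f y - f x) < eps1 /\ Rabs (g y - g x) < eps2.
Proof.
move=> Ux He1 He2 Hf Hg.
have [d1 [Hd1 H1]] := Hf x Ux eps1 He1; have [d2 [Hd2 H2]] := Hg x Ux eps2 He2.
exists (Rmin d1 d2); split; first exact: Rmin_pos.
move=> y Uy Hy; split.
- by apply: H1 => //; apply: Rlt_le_trans Hy (Rmin_l _ _).
- by apply: H2 => //; apply: Rlt_le_trans Hy (Rmin_r _ _).
Qed.

Lemma continuous_on3_plus U f g : continuous_on3 U f -> continuous_on3 U g ->
  continuous_on3 U (fun x => f x + g x).
Proof.
move=> Hf Hg x Ux eps Heps.
have He : 0 < eps / 2 by lra.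
have [d [Hd H]] := continuous_on3_both _ _ Ux He He Hf Hg.
exists d; split => // y Uy Hy; have [A1 A2] := H y Uy Hy.
rewrite (_ : f y + g y - (f x + g x) = (f y - f x) + (g y - g x)); last ring.
by apply: Rle_lt_trans (Rabs_triang _ _) _; lra.
Qed.

(* With u = f y - f x and v = g y - g x,
   f y g y - f x g x = u g x + f y v, and |f y| <= |f x| + 1 once |u| < 1. *)
Lemma continuous_on3_mult U f g : continuous_on3 U f -> continuous_on3 U g ->
  continuous_on3 U (fun x => f x * g x).
Proof.
move=> Hf Hg x Ux eps Heps.
set a := Rabs (f x) + 1; set b := Rabs (g x) + 1.
have Ha : 0 < a by rewrite /a; have := Rabs_pos (f x); lra.
have Hb : 0 < b by rewrite /b; have := Rabs_pos (g x); lra.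
have He1 : 0 < Rmin 1 (eps / (2 * b)).
  by apply: Rmin_pos; [lra | apply: Rdiv_lt_0_compat; lra].
have He2 : 0 < eps / (2 * a) by apply: Rdiv_lt_0_compat; lra.
have [d [Hd H]] := continuous_on3_both _ _ Ux He1 He2 Hf Hg.
exists d; split => // y Uy Hy; have [A1 A2] := H y Uy Hy.
set u := f y - f x in A1; set v := g y - g x in A2.
have u1 : Rabs u < 1 by apply: Rlt_le_trans A1 (Rmin_l _ _).
have ub : Rabs u * (2 * b) < eps.
  have -> : eps = eps / (2 * b) * (2 * b) by field; lra.
  by apply: Rmult_lt_compat_r; [lra | apply: Rlt_le_trans A1 (Rmin_r _ _)].
have va : Rabs v * (2 * a) < eps.
  have -> : eps = eps / (2 * a) * (2 * a) by field; lra.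
  by apply: Rmult_lt_compat_r; [lra | exact: A2].
have fy : Rabs (f y) <= a.
  rewrite /a (_ : f y = f x + u); last by rewrite /u; ring.
  by apply: Rle_trans (Rabs_triang _ _) _; lra.
have gx : Rabs (g x) < b by rewrite /b; lra.
rewrite (_ : f y * g y - f x * g x = u * g x + f y * v); last by rewrite /u /v; ring.
apply: Rle_lt_trans (Rabs_triang _ _) _; rewrite !Rabs_mult.
have := Rabs_pos u; have := Rabs_pos v; have := Rabs_pos (f y); have := Rabs_pos (g x).
nra.
Qed.

Lemma continuous_on3_sub U V f : (forall x, V x -> U x) ->
  continuous_on3 U f -> continuous_on3 V f.
Proof.
move=> VU Hf x Vx eps Heps; have [d [Hd H]] := Hf x (VU x Vx) eps Heps.
by exists d; split => // y Vy; apply: H; apply: VU.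
Qed.

Lemma Ck_S {k U f} : Ck (S k) U f -> Ck k U f.
Proof.
elim: k f => [|k IH] f; first by case.
case=> Hc [df [Hd Hk]]; split => //.
by exists df; split => // i Hi; apply: IH; apply: Hk.
Qed.

Lemma Ck_sub k U V f : (forall x, V x -> U x) -> Ck k U f -> Ck k V f.
Proof.
move=> VU; elim: k f => [|k IH] f; first exact: continuous_on3_sub.
case=> Hc [df [Hd Hk]]; split; first exact: continuous_on3_sub Hc.
exists df; split; first by move=> i x Hi Vx; apply: Hd => //; apply: VU.
by move=> i Hi; apply: IH; apply: Hk.
Qed.

Lemma Ck_const k U a : Ck k U (fun _ => a).
Proof.
elim: k a => [|k IH] a; first exact: continuous_on3_const.
split; first exact: continuous_on3_const.
exists (fun _ _ => 0); split => [i x _ _|i _]; first exact: derivable_pt_lim_const.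
exact: IH.
Qed.

Lemma Ck_plus k U f g : Ck k U f -> Ck k U g -> Ck k U (fun x => f x + g x).
Proof.
elim: k f g => [|k IH] f g; first exact: continuous_on3_plus.
case=> Hfc [df [Hfd Hfk]] [Hgc [dg [Hgd Hgk]]].
split; first exact: continuous_on3_plus.
exists (fun i x => df i x + dg i x); split.
- by move=> i x Hi Ux; apply: derivable_pt_lim_plus; [apply: Hfd | apply: Hgd].
- by move=> i Hi; apply: IH; [apply: Hfk | apply: Hgk].
Qed.

(* Leibniz rule: the partial derivatives of f g are df g + f dg, which are
   C^k because f and g are C^(k+1), hence C^k. *)
Lemma Ck_mult k U f g : Ck k U f -> Ck k U g -> Ck k U (fun x => f x * g x).
Proof.
elim: k f g => [|k IH] f g; first exact: continuous_on3_mult.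
move=> Hf Hg; have Hf' := Ck_S Hf; have Hg' := Ck_S Hg.
case: Hf => Hfc [df [Hfd Hfk]]; case: Hg => Hgc [dg [Hgd Hgk]].
split; first exact: continuous_on3_mult.
exists (fun i x => df i x * g x + f x * dg i x); split.
- move=> i x Hi Ux.
  have D := derivable_pt_lim_mult _ _ 0 _ _ (Hfd i x Hi Ux) (Hgd i x Hi Ux).
  by rewrite shift3_0 in D.
- by move=> i Hi; apply: Ck_plus; apply: IH => //; [apply: Hfk | apply: Hgk].
Qed.

Lemma open3_inter U V : open3 U -> open3 V -> open3 (fun x => U x /\ V x).
Proof.
move=> HU HV x [Ux Vx].
have [r1 [Hr1 H1]] := HU x Ux; have [r2 [Hr2 H2]] := HV x Vx.
exists (Rmin r1 r2); split; first exact: Rmin_pos.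
move=> y Hy; split.
- by apply: H1; apply: Rlt_le_trans Hy (Rmin_l _ _).
- by apply: H2; apply: Rlt_le_trans Hy (Rmin_r _ _).
Qed.

Lemma smooth_S2_ext {f g} : smooth_S2 f -> (forall k, S2 k -> f k = g k) -> smooth_S2 g.
Proof.
case=> U [h [HU [HS [Hh He]]]] Hfg; exists U, h; do !split => //.
by move=> x Sx; rewrite He // Hfg.
Qed.

Lemma smooth_S2_const a : smooth_S2 (fun _ => a).
Proof.
exists (fun _ => True), (fun _ => a); do !split => //.
- by move=> x _; exists 1; split => //; lra.
- by move=> k; apply: Ck_const.
Qed.

(* If two smooth functions on S^2 extend to open neighbourhoods U, V of S^2,
   then any C^k-preserving operation on them extends to the open set U /\ V. *)
Lemma smooth_S2_op {op : R -> R -> R} {f g} :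
  (forall k U f g, Ck k U f -> Ck k U g -> Ck k U (fun x => op (f x) (g x))) ->
  smooth_S2 f -> smooth_S2 g -> smooth_S2 (fun k => op (f k) (g k)).
Proof.
move=> Hop [U [h [HU [HS [Hh He]]]]] [V [h' [HV [HS' [Hh' He']]]]].
exists (fun x => U x /\ V x), (fun x => op (h x) (h' x)); do !split.
- exact: open3_inter.
- exact: HS.
- exact: HS'.
- move=> k; apply: Hop; [apply: Ck_sub (Hh k) | apply: Ck_sub (Hh' k)]; tauto.
- by move=> x Sx; rewrite He // He'.
Qed.

Lemma smooth_S2_plus {f g} : smooth_S2 f -> smooth_S2 g -> smooth_S2 (fun k => f k + g k).
Proof. exact: smooth_S2_op Ck_plus. Qed.

Lemma smooth_S2_mult {f g} : smooth_S2 f -> smooth_S2 g -> smooth_S2 (fun k => f k * g k).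
Proof. exact: smooth_S2_op Ck_mult. Qed.

Lemma smooth_S2_opp {f} : smooth_S2 f -> smooth_S2 (fun k => - f k).
Proof.
move=> Hf; apply: (smooth_S2_ext (smooth_S2_mult (smooth_S2_const (-1)) Hf)).
by move=> k _; ring.
Qed.

Open Scope ring_scope.

Lemma smooth_S2_sum (I : Type) (s : seq I) (P : pred I) (F : I -> R3 -> R) :
  (forall i, smooth_S2 (F i)) -> smooth_S2 (fun k => \sum_(i <- s | P i) F i k).
Proof.
move=> HF; elim: s => [|x s IH].
  by apply: (smooth_S2_ext (smooth_S2_const 0)) => k _; rewrite big_nil.
case Px: (P x); last by apply: (smooth_S2_ext IH) => k _; rewrite big_cons Px.
apply: (smooth_S2_ext (smooth_S2_plus (HF x) IH)) => k _.
by rewrite big_cons Px.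
Qed.

Lemma smooth_S2_prod (I : Type) (s : seq I) (P : pred I) (F : I -> R3 -> R) :
  (forall i, smooth_S2 (F i)) -> smooth_S2 (fun k => \prod_(i <- s | P i) F i k).
Proof.
move=> HF; elim: s => [|x s IH].
  by apply: (smooth_S2_ext (smooth_S2_const 1)) => k _; rewrite big_nil.
case Px: (P x); last by apply: (smooth_S2_ext IH) => k _; rewrite big_cons Px.
apply: (smooth_S2_ext (smooth_S2_mult (HF x) IH)) => k _.
by rewrite big_cons Px.
Qed.

Lemma horner_mx_prod_XsubC (F : fieldType) n (A : 'M[F]_n.+1) (s : seq F) :
  horner_mx A (\prod_(x <- s) ('X - x%:P)) = \prod_(x <- s) (A - x%:M).
Proof.
rewrite rmorph_prod; apply: eq_bigr => x _.
by rewrite rmorphB /= horner_mx_X horner_mx_C.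
Qed.

Lemma diag_similar_annihilated {F : fieldType} {n} {M S : 'M[F]_n.+1} {mu : 'rV[F]_n.+1} :
  S \in unitmx -> M *m S = S *m diag_mx mu ->
  \prod_(x <- undup [seq mu 0 i | i <- enum 'I_n.+1]) (M - x%:M) = 0.
Proof.
move=> Su HS; have HM : M = conjmx S (diag_mx mu) by rewrite conjumx // -HS mulmxK.
rewrite -horner_mx_prod_XsubC -mxminpoly_diag -(mxminpoly_uconj _ Su) -HM.
exact: mx_root_minpoly.
Qed.

Lemma split_annihilator_diagonalizes {F : fieldType} {n} {A : 'M[F]_n.+1} {rs : seq F} :
  uniq rs -> horner_mx A (\prod_(r <- rs) ('X - r%:P)) = 0 ->
  exists (W : 'M[F]_n.+1) (d : 'rV[F]_n.+1),
    [/\ W \in unitmx, A *m W = W *m diag_mx d & forall i, d 0 i \in rs].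
Proof.
move=> urs /mxminpoly_min dvd_min.
have [V Vu /(diagonalizable_forLR Vu) [d Hd]] : diagonalizable A.
  by apply/diagonalizableP; exists rs.
exists (invmx V), d; split; first by rewrite unitmx_inv.
  by rewrite Hd mxpoly.conjumx ?unitmx_inv // invmxK mulmxK.
move=> i; rewrite -root_prod_XsubC; apply: root_dvdp dvd_min _.
rewrite Hd mxminpoly_uconj ?unitmx_inv // mxminpoly_diag root_prod_XsubC mem_undup.
by apply: map_f; rewrite mem_enum.
Qed.

Section AntidiagonalBlock.
Context {F : fieldType} {a b : nat} (Q : 'M[F]_(a, b)) (Rm : 'M[F]_(b, a)).

Lemma antidiag_sqr :
  (block_mx 0 Q Rm 0 : 'M_(a + b)) ^+ 2 = block_mx (Q *m Rm) 0 0 (Rm *m Q).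
Proof. by rewrite expr2 -mulmxE mulmx_block !mul0mx !mulmx0 !add0r !addr0. Qed.

Lemma prod_block_diag (A : 'M[F]_a) (B : 'M[F]_b) (s : seq F) :
  \prod_(x <- s) (block_mx A 0 0 B - x%:M : 'M_(a + b))
  = block_mx (\prod_(x <- s) (A - x%:M)) 0 0 (\prod_(x <- s) (B - x%:M)).
Proof.
elim: s => [|x s IH]; first by rewrite !big_nil -scalar_mx_block.
rewrite !big_cons IH (scalar_mx_block a b x) opp_block_mx add_block_mx.
by rewrite -!mulmxE mulmx_block !oppr0 !addr0 !mul0mx !mulmx0 !addr0 !add0r.
Qed.

(* Q intertwines R Q and Q R, hence every polynomial in them. *)
Lemma mul_prod_RQ (s : seq F) :
  Q *m \prod_(x <- s) (Rm *m Q - x%:M) = \prod_(x <- s) (Q *m Rm - x%:M) *m Q.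
Proof.
elim: s => [|x s IH]; first by rewrite !big_nil mulmx1 mul1mx.
rewrite !big_cons -!mulmxE -mulmxA -IH !mulmxA mulmxBl mulmxBr mulmxA.
by rewrite scalar_mxC.
Qed.

Lemma antidiag_annihilated {s : seq F} :
  \prod_(x <- s) (Q *m Rm - x%:M) = 0 ->
  (block_mx 0 Q Rm 0 : 'M_(a + b))
    * \prod_(x <- s) ((block_mx 0 Q Rm 0 : 'M_(a + b)) ^+ 2 - x%:M) = 0.
Proof.
move=> H0; rewrite antidiag_sqr prod_block_diag H0 -mulmxE mulmx_block.
by rewrite !mul0mx !mulmx0 ?add0r ?addr0 mul_prod_RQ H0 mul0mx block_mx0.
Qed.

End AntidiagonalBlock.

Lemma sqrt_gt0 {x : R} : 0 < x -> 0 < sqrt x.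
Proof. by move/RltP/sqrt_lt_R0/RltP. Qed.

Lemma sqrt_sqr {x : R} : 0 < x -> sqrt x ^+ 2 = x.
Proof. by move/RltP/Rlt_le => hx; rewrite expr2 -RmultE sqrt_sqrt. Qed.

Definition sqrt_spectrum (rs : seq R) : seq R :=
  0 :: [seq sqrt x | x <- rs] ++ [seq - sqrt x | x <- rs].

Lemma sqrt_spectrum_uniq {rs : seq R} :
  uniq rs -> {in rs, forall x, 0 < x} -> uniq (sqrt_spectrum rs).
Proof.
move=> urs pos.
have sqrt_inj : {in rs &, injective sqrt}.
  by move=> x y /pos x0 /pos y0 E; rewrite -(sqrt_sqr x0) -(sqrt_sqr y0) E.
have nsqrt_inj : {in rs &, injective (fun x => - sqrt x)}.
  by move=> x y xrs yrs /oppr_inj; apply: sqrt_inj.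
rewrite /sqrt_spectrum cons_uniq mem_cat cat_uniq !map_inj_in_uniq // urs andbT.
rewrite /=; apply/andP; split.
  apply/norP; split; apply/mapP => -[x /pos/sqrt_gt0 x0 E].
    by rewrite -E ltxx in x0.
  by rewrite -oppr_lt0 -E ltxx in x0.
apply/hasPn => _ /mapP [y /pos/sqrt_gt0 y0 ->].
apply/mapP => -[x /pos/sqrt_gt0 x0 E].
have : - sqrt y < sqrt x by rewrite (lt_trans _ x0) // oppr_lt0.
by rewrite E ltxx.
Qed.

Lemma sqrt_spectrum_poly (rs : seq R) : {in rs, forall x, 0 < x} ->
  \prod_(r <- sqrt_spectrum rs) ('X - r%:P) = 'X * \prod_(x <- rs) ('X ^+ 2 - x%:P).
Proof.
move=> pos; rewrite big_cons big_cat /= !big_map subr0 -big_split /=; congr (_ * _).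
apply: eq_big_seq => x /pos x0.
by rewrite polyCN opprK -subr_sqr -polyC_exp sqrt_sqr.
Qed.

Lemma antidiag_diagonalizable {n m} {Q : 'M[R]_(n.+1, m)} {Rm : 'M[R]_(m, n.+1)}
    {S : 'M[R]_n.+1} {mu : 'rV[R]_n.+1} :
  S \in unitmx -> Q *m Rm *m S = S *m diag_mx mu -> (forall j, 0 < mu 0 j) ->
  exists (W : 'M[R]_((n + m).+1)) (d : 'rV[R]_((n + m).+1)),
    [/\ W \in unitmx, block_mx 0 Q Rm 0 *m W = W *m diag_mx d &
        forall i, d 0 i = 0 \/
          exists j, d 0 i = sqrt (mu 0 j) \/ d 0 i = - sqrt (mu 0 j)].
Proof.
move=> Su HS pos.
set rs := undup [seq mu 0 i | i <- enum 'I_n.+1].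
have rs_pos : {in rs, forall x, 0 < x} by move=> x; rewrite mem_undup => /mapP [i _ ->].
have P_root : horner_mx (block_mx 0 Q Rm 0 : 'M_((n + m).+1))
                (\prod_(r <- sqrt_spectrum rs) ('X - r%:P)) = 0.
  rewrite sqrt_spectrum_poly // rmorphM rmorph_prod /= horner_mx_X.
  under eq_bigr do rewrite rmorphB /= rmorphXn /= horner_mx_X horner_mx_C.
  exact: (antidiag_annihilated Q Rm (diag_similar_annihilated Su HS)).
have [W [d [Wu HW Hd]]] :=
  split_annihilator_diagonalizes (sqrt_spectrum_uniq (undup_uniq _) rs_pos) P_root.
exists W, d; split => // i; move: (Hd i).
rewrite inE mem_cat => /orP [/eqP ->|/orP [] /mapP [x]]; first by left.
- by rewrite mem_undup => /mapP [j _ ->] ->; right; exists j; left.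
- by rewrite mem_undup => /mapP [j _ ->] ->; right; exists j; right.
Qed.

Definition qf {k} (v : 'rV[R]_k) (A : 'M[R]_k) : R := (v *m (A *m v^T)) 0 0.
Definition pdm {k} (A : 'M[R]_k) : Prop := forall v : 'rV[R]_k, v != 0 -> 0 < qf v A.

Lemma sqnorm_ge0 k (v : 'rV[R]_k) : 0 <= (v *m v^T) 0 0.
Proof. by rewrite mxE; apply: sumr_ge0 => i _; rewrite mxE -expr2 sqr_ge0. Qed.

Lemma sqnorm_gt0 k (v : 'rV[R]_k) : v != 0 -> 0 < (v *m v^T) 0 0.
Proof.
move=> nv; rewrite lt0r sqnorm_ge0 andbT; apply: contra nv; rewrite mxE => /eqP H.
have v2 : forall i, v 0 i * v^T i 0 = 0.
  by move=> i; apply: (psumr_eq0P _ H) => // j _; rewrite mxE -expr2 sqr_ge0.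
apply/eqP/rowP => i; rewrite mxE.
by have /eqP := v2 i; rewrite mxE mulf_eq0 orbb => /eqP.
Qed.

Lemma pdm_ge0 k (A : 'M[R]_k) (v : 'rV_k) : pdm A -> 0 <= qf v A.
Proof.
move=> hA; have [->|nv] := eqVneq v 0; last exact/ltW/hA.
by rewrite /qf mul0mx mxE.
Qed.

Lemma qf_block n m (A : 'M[R]_n) (B : 'M[R]_m) (v : 'rV_(n + m)) :
  qf v (block_mx A 0 0 B) = qf (lsubmx v) A + qf (rsubmx v) B.
Proof.
rewrite /qf -{1 2}(hsubmxK v) tr_row_mx mul_block_col !mul0mx addr0 add0r.
by rewrite mul_row_col mxE.
Qed.

Lemma pdm_det_neq0 k (A B : 'M[R]_k) : pdm (A *m B) -> \det B != 0.
Proof.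
move=> hAB; apply/negP => /eqP detB.
have /det0P [v nv vB] : \det B^T == 0 by rewrite det_tr detB.
have Bv : B *m v^T = 0 by rewrite -[B]trmxK -trmx_mul vB trmx0.
by have := hAB v nv; rewrite /qf -mulmxA Bv !mulmx0 mxE ltxx.
Qed.

Section Symmetrizer.
Context {n m : nat} (Q : 'M[R]_(n, m)) (Rm : 'M[R]_(m, n)) (H1 : 'M[R]_n).
Local Notation M := (Q *m Rm).

(* det(M) (I - R M^-1 Q): a multiple of the projection onto ker Q along
   im R, written with the adjugate so that it depends polynomially on Q, R. *)
Definition corrector : 'M[R]_m := \det M *: 1%:M - Rm *m \adj M *m Q.

Definition symmetrizer : 'M[R]_(n + m) :=
  block_mx (H1 *m M) 0 0 (Q^T *m H1 *m Q + corrector^T *m corrector).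

Lemma corrector_mulR : corrector *m Rm = 0.
Proof.
rewrite /corrector mulmxBl -scalemxAl mul1mx -!mulmxA mul_adj_mx mul_mx_scalar.
exact: subrr.
Qed.

Lemma corrector_kerQ (b : 'rV_m) : b *m Q^T = 0 -> b *m corrector^T = \det M *: b.
Proof.
move=> bQ; rewrite /corrector linearD /= linearN /= !trmx_mul mulmxDr mulmxN.
by rewrite !mulmxA bQ !mul0mx subr0 linearZ /= trmx1 -scalemxAr mulmx1.
Qed.

Hypotheses (H1_sym : H1^T = H1) (H1_pd : pdm H1).
Hypotheses (H1M_sym : (H1 *m M)^T = H1 *m M) (H1M_pd : pdm (H1 *m M)).

Lemma trM_H1 : M^T *m H1 = H1 *m M.
Proof. by rewrite -H1M_sym [RHS]trmx_mul H1_sym. Qed.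

Lemma symmetrizer_sym : symmetrizer^T = symmetrizer.
Proof.
rewrite /symmetrizer tr_block_mx !trmx0 H1M_sym; congr block_mx.
rewrite linearD /= !trmx_mul !trmxK mulmxA.
by congr (_ *m _ *m _ + _); apply: H1_sym.
Qed.

(* The lower block is positive definite: Q^T H1 Q controls the complement of
   ker Q, and C^T C = det(M)^2 on ker Q, where det M <> 0. *)
Lemma lower_block_pd : pdm (Q^T *m H1 *m Q + corrector^T *m corrector).
Proof.
move=> b nb.
have -> : qf b (Q^T *m H1 *m Q + corrector^T *m corrector) =
          qf (b *m Q^T) H1 + ((b *m corrector^T) *m (b *m corrector^T)^T) 0 0.
  by rewrite /qf !trmx_mul !trmxK mulmxDl mulmxDr mxE !mulmxA.
have [bQ|nbQ] := eqVneq (b *m Q^T) 0; last first.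
  by apply: ltr_wpDr; [exact: sqnorm_ge0 | exact: H1_pd].
rewrite bQ {1}/qf mul0mx mxE add0r; apply: sqnorm_gt0.
rewrite corrector_kerQ // scaler_eq0 negb_or nb andbT.
exact: pdm_det_neq0 H1M_pd.
Qed.

Lemma symmetrizer_pd : pdm symmetrizer.
Proof.
move=> v nv; rewrite /symmetrizer qf_block.
have [a0|na] := eqVneq (lsubmx v) 0; last first.
  by apply: ltr_wpDr; [exact: pdm_ge0 lower_block_pd | exact: H1M_pd].
rewrite a0 {1}/qf mul0mx mxE add0r; apply: lower_block_pd.
by apply: contra nv => /eqP b0; rewrite -(hsubmxK v) a0 b0 row_mx0.
Qed.

Lemma symmetrizer_intertwines :
  symmetrizer *m block_mx 0 Q Rm 0 = (block_mx 0 Q Rm 0)^T *m symmetrizer.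
Proof.
rewrite /symmetrizer tr_block_mx !trmx0 !mulmx_block !mul0mx !mulmx0 !addr0 !add0r.
congr block_mx.
  by rewrite mulmxDr !mulmxA -!trmx_mul corrector_mulR trmx0 mul0mx addr0 trM_H1 mulmxA.
by rewrite mulmxDl -!mulmxA corrector_mulR mulmx0 addr0.
Qed.

End Symmetrizer.

Definition tomx r c (A : mat) : 'M[R]_(r, c) := \matrix_(i < r, j < c) A i j.

Definition ofmx {r c} (M : 'M[R]_(r, c)) : mat := fun i j =>
  match (insub i : option 'I_r), (insub j : option 'I_c) with
  | Some i', Some j' => M i' j'
  | _, _ => 0
  end.

Lemma ofmxE {r c} (M : 'M[R]_(r, c)) (i : 'I_r) (j : 'I_c) : ofmx M i j = M i j.
Proof. by rewrite /ofmx !valK. Qed.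

Lemma ofmxK r c (M : 'M[R]_(r, c)) : tomx r c (ofmx M) = M.
Proof. by apply/matrixP => i j; rewrite mxE ofmxE. Qed.

Lemma row_ofmx {N} (v : 'rV[R]_N) : \row_(j < N) ofmx v 0%N j = v.
Proof. by apply/rowP => j; rewrite mxE (ofmxE v ord0 j). Qed.

Lemma mat_eq_tomx r c A B : mat_eq r c A B <-> tomx r c A = tomx r c B.
Proof.
split => [H | /matrixP H i j /ssrnat.ltP Hi /ssrnat.ltP Hj].
- by apply/matrixP => i j; rewrite !mxE; apply: H; apply/ssrnat.ltP.
- by have := H (Ordinal Hi) (Ordinal Hj); rewrite !mxE.
Qed.

Lemma rsum_big p f : rsum p f = \sum_(i < p) f i.
Proof. by elim: p => [|p IH] /=; rewrite ?big_ord0 // big_ord_recr IH. Qed.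

Lemma tomx_mul r p c A B : tomx r c (mmul p A B) = tomx r p A *m tomx p c B.
Proof.
apply/matrixP => i j; rewrite !mxE /mmul rsum_big.
by apply: eq_bigr => k _; rewrite !mxE.
Qed.

Lemma tomx_tr N A : tomx N N (mtr A) = (tomx N N A)^T.
Proof. by apply/matrixP => i j; rewrite !mxE. Qed.

Lemma eqbE (i j : nat) : Nat.eqb i j = (i == j).
Proof. by case: (Nat.eqb_spec i j) => [->|/eqP/negbTE ->]; rewrite ?eqxx. Qed.

Lemma ltbE (i j : nat) : Nat.ltb i j = (i < j)%N.
Proof. by case: (Nat.ltb_spec0 i j) => /ssrnat.ltP; [move=> -> | move/negbTE ->]. Qed.

Lemma tomx_idm N : tomx N N idm = 1%:M.
Proof.
by apply/matrixP => i j; rewrite !mxE /idm eqbE -val_eqE; case: eqP.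
Qed.

Lemma tomx_diagm N d : tomx N N (diagm d) = diag_mx (\row_(i < N) d i).
Proof.
apply/matrixP => i j; rewrite !mxE /diagm eqbE -val_eqE.
by case: eqP => [/val_inj ->|].
Qed.

Lemma tomx_blockP n m Q R' :
  tomx (n + m) (n + m) (blockP n Q R') = block_mx 0 (tomx n m Q) (tomx m n R') 0.
Proof.
apply/matrixP => i j; rewrite mxE /blockP !ltbE.
by case: (split_ordP i) => i' ->; case: (split_ordP j) => j' ->;
  rewrite ?block_mxEul ?block_mxEur ?block_mxEdl ?block_mxEdr !mxE /=
          ?ltn_ord ?ltnNge ?leq_addr //= minusE addKn.
Qed.

Lemma invertible_unit N S : invertible N S -> tomx N N S \in unitmx.
Proof.
by case=> T [/mat_eq_tomx + _]; rewrite tomx_mul tomx_idm => /mulmx1_unit [].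
Qed.

Lemma unit_invertible N (V : 'M[R]_N) : V \in unitmx -> invertible N (ofmx V).
Proof.
move=> Vu; exists (ofmx (invmx V)); split; apply/mat_eq_tomx;
  by rewrite tomx_mul !ofmxK tomx_idm ?mulmxV ?mulVmx.
Qed.

Lemma sym_tomx N A : Defs.symmetric N A -> (tomx N N A)^T = tomx N N A.
Proof. by move=> H; apply/matrixP => i j; rewrite !mxE; apply: H; apply/ssrnat.ltP. Qed.

Lemma tr_sym N (A : 'M[R]_N) : A^T = A -> Defs.symmetric N (ofmx A).
Proof.
move=> HA i j /ssrnat.ltP Hi /ssrnat.ltP Hj.
by rewrite (ofmxE A (Ordinal Hi) (Ordinal Hj)) (ofmxE A (Ordinal Hj) (Ordinal Hi)) -{1}HA mxE.
Qed.

Lemma qf_rsum N A (x : nat -> R) :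
  rsum N (fun i => x i * rsum N (fun j => A i j * x j)) = qf (\row_(i < N) x i) (tomx N N A).
Proof.
rewrite /qf mxE rsum_big; apply: eq_bigr => i _.
rewrite !mxE rsum_big; congr (_ * _); apply: eq_bigr => j _; by rewrite !mxE.
Qed.

Lemma pos_def_pdm N A : pos_def N A -> pdm (tomx N N A).
Proof.
move=> HA v nv.
have [i vi] : exists i : 'I_N, v 0 i != 0.
  apply/existsP; apply: contraR nv; rewrite negb_exists => /forallP v0.
  by apply/eqP/rowP => i; rewrite mxE; apply/eqP; rewrite -[_ == _]negbK v0.
have := HA (ofmx v 0%N); rewrite qf_rsum row_ofmx => H; apply/RltP/H; exists i; split; first exact/ssrnat.ltP.
by rewrite (ofmxE v ord0 i); apply/eqP.
Qed.

Lemma pdm_pos_def N (A : 'M[R]_N) : pdm A -> pos_def N (ofmx A).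
Proof.
move=> HA x [i [/ssrnat.ltP Hi xi]]; rewrite qf_rsum ofmxK; apply/RltP/HA.
by apply/negP => /eqP/rowP/(_ (Ordinal Hi)); rewrite !mxE.
Qed.

Definition smooth_mx {r c} (F : R3 -> 'M[R]_(r, c)) : Prop :=
  forall i j, smooth_S2 (fun k => F k i j).

Lemma smooth_mx_tomx {r c F} : smooth_mat r c F -> smooth_mx (fun k => tomx r c (F k)).
Proof.
move=> HF i j.
apply: (smooth_S2_ext (HF i j (elimT ssrnat.ltP (ltn_ord i)) (elimT ssrnat.ltP (ltn_ord j)))).
by move=> k _; rewrite mxE.
Qed.

Lemma smooth_mx_ofmx {r c} {F : R3 -> 'M[R]_(r, c)} :
  smooth_mx F -> smooth_mat r c (fun k => ofmx (F k)).
Proof.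
move=> HF i j /ssrnat.ltP Hi /ssrnat.ltP Hj; apply: (smooth_S2_ext (HF (Ordinal Hi) (Ordinal Hj))).
by move=> k _; rewrite (ofmxE (F k) (Ordinal Hi) (Ordinal Hj)).
Qed.

Lemma smooth_mx_const {r c} (A : 'M[R]_(r, c)) : smooth_mx (fun _ => A).
Proof. by move=> i j; apply: smooth_S2_const. Qed.

Lemma smooth_mx_add {r c} {F G : R3 -> 'M[R]_(r, c)} :
  smooth_mx F -> smooth_mx G -> smooth_mx (fun k => F k + G k).
Proof.
move=> HF HG i j; apply: (smooth_S2_ext (smooth_S2_plus (HF i j) (HG i j))).
by move=> k _; rewrite mxE.
Qed.

Lemma smooth_mx_opp {r c} {F : R3 -> 'M[R]_(r, c)} :
  smooth_mx F -> smooth_mx (fun k => - F k).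
Proof.
move=> HF i j; apply: (smooth_S2_ext (smooth_S2_opp (HF i j))).
by move=> k _; rewrite mxE.
Qed.

Lemma smooth_mx_scale {r c} {a : R3 -> R} {F : R3 -> 'M[R]_(r, c)} :
  smooth_S2 a -> smooth_mx F -> smooth_mx (fun k => a k *: F k).
Proof.
move=> Ha HF i j; apply: (smooth_S2_ext (smooth_S2_mult Ha (HF i j))).
by move=> k _; rewrite mxE.
Qed.

Lemma smooth_mx_tr {r c} {F : R3 -> 'M[R]_(r, c)} :
  smooth_mx F -> smooth_mx (fun k => (F k)^T).
Proof. by move=> HF i j; apply: (smooth_S2_ext (HF j i)) => k _; rewrite mxE. Qed.

Lemma smooth_mx_mul {r p c} {F : R3 -> 'M[R]_(r, p)} {G : R3 -> 'M[R]_(p, c)} :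
  smooth_mx F -> smooth_mx G -> smooth_mx (fun k => F k *m G k).
Proof.
move=> HF HG i j.
apply: (smooth_S2_ext (f := fun k => \sum_(l < p) F k i l * G k l j)).
  by apply: smooth_S2_sum => l; apply: smooth_S2_mult.
by move=> k _; rewrite mxE.
Qed.

Lemma smooth_mx_block {r1 r2 c1 c2} {A : R3 -> 'M[R]_(r1, c1)} {B : R3 -> 'M[R]_(r1, c2)}
    {C : R3 -> 'M[R]_(r2, c1)} {D : R3 -> 'M[R]_(r2, c2)} :
  smooth_mx A -> smooth_mx B -> smooth_mx C -> smooth_mx D ->
  smooth_mx (fun k => block_mx (A k) (B k) (C k) (D k)).
Proof.
move=> HA HB HC HD i j.
case: (split_ordP i) => i' ->; case: (split_ordP j) => j' ->.
- by apply: (smooth_S2_ext (HA i' j')) => k _; rewrite block_mxEul.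
- by apply: (smooth_S2_ext (HB i' j')) => k _; rewrite block_mxEur.
- by apply: (smooth_S2_ext (HC i' j')) => k _; rewrite block_mxEdl.
- by apply: (smooth_S2_ext (HD i' j')) => k _; rewrite block_mxEdr.
Qed.

Lemma smooth_det {n} {F : R3 -> 'M[R]_n} :
  smooth_mx F -> smooth_S2 (fun k => \det (F k)).
Proof.
move=> HF; apply: smooth_S2_sum => s.
apply: smooth_S2_mult; first exact: smooth_S2_const.
by apply: smooth_S2_prod => i; apply: HF.
Qed.

Lemma smooth_mx_adj {n} {F : R3 -> 'M[R]_n} :
  smooth_mx F -> smooth_mx (fun k => \adj (F k)).
Proof.
move=> HF i j.
have Hminor : smooth_S2 (fun k => \det (row' j (col' i (F k)))).
  apply: smooth_det => a b.
  by apply: (smooth_S2_ext (HF (lift j a) (lift i b))) => k _; rewrite !mxE.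
apply: (smooth_S2_ext (smooth_S2_mult (smooth_S2_const ((-1) ^+ (j + i))) Hminor)).
by move=> k _; rewrite mxE.
Qed.

Lemma smooth_symmetrizer n m (Q : R3 -> 'M[R]_(n, m)) (Rm : R3 -> 'M[R]_(m, n))
    (H1 : R3 -> 'M[R]_n) :
  smooth_mx Q -> smooth_mx Rm -> smooth_mx H1 ->
  smooth_mx (fun k => symmetrizer (Q k) (Rm k) (H1 k)).
Proof.
move=> sQ sR sH; have sM := smooth_mx_mul sQ sR.
have sC : smooth_mx (fun k => corrector (Q k) (Rm k)).
  apply: smooth_mx_add; first exact: smooth_mx_scale (smooth_det sM) (smooth_mx_const _).
  apply/smooth_mx_opp/(smooth_mx_mul _ sQ).
  exact: smooth_mx_mul sR (smooth_mx_adj sM).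
apply: smooth_mx_block; [exact: smooth_mx_mul | exact: smooth_mx_const
                        | exact: smooth_mx_const |].
apply: smooth_mx_add; last exact: smooth_mx_mul (smooth_mx_tr sC) sC.
exact: smooth_mx_mul (smooth_mx_mul (smooth_mx_tr sQ) sH) sQ.
Qed.

Open Scope R_scope.

Lemma part_a n m (Q R' SM : mat) (mu : nat -> R) : (1 <= n)%coq_nat ->
  diagonalizes n (mmul m Q R') SM mu -> (forall j, (j < n)%coq_nat -> 0 < mu j) ->
  exists (SP : mat) (lam : nat -> R),
    diagonalizes (n + m) (blockP n Q R') SP lam /\
    forall i, (i < n + m)%coq_nat ->
      lam i = 0 \/
      exists j, (j < n)%coq_nat /\ (lam i = sqrt (mu j) \/ lam i = - sqrt (mu j)).
Proof.
case: n => [/Nat.nle_succ_0 []|n] _ [/invertible_unit Su /mat_eq_tomx].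
rewrite !tomx_mul tomx_diagm => HS Hpos.
have mu_pos : forall j, (0 < (\row_(i < n.+1) mu i) 0 j)%R.
  by move=> j; rewrite mxE; apply/RltP/Hpos/ssrnat.ltP.
have [W [d [Wu HW Hd]]] := antidiag_diagonalizable Su HS mu_pos.
exists (ofmx W), (ofmx d 0%N); split.
  split; first exact: unit_invertible.
  apply/mat_eq_tomx; rewrite !tomx_mul tomx_blockP tomx_diagm ofmxK.
  by rewrite (row_ofmx d).
move=> i /ssrnat.ltP Hi; rewrite (ofmxE d ord0 (Ordinal Hi)).
case: (Hd (Ordinal Hi)) => [->|[j Hj]]; first by left.
by right; exists j; split; [apply/ssrnat.ltP | rewrite mxE in Hj].
Qed.

Lemma part_b n m (Q R' : R3 -> mat) :
  smooth_mat n m Q -> smooth_mat m n R' ->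
  (exists H1 : R3 -> mat,
      smooth_mat n n H1 /\
      forall k, S2 k ->
        sym_pos_def n (H1 k) /\
        sym_pos_def n (mmul n (H1 k) (mmul m (Q k) (R' k)))) ->
  exists H : R3 -> mat,
    smooth_mat (n + m) (n + m) H /\
    forall k, S2 k ->
      sym_pos_def (n + m) (H k) /\
      mat_eq (n + m) (n + m)
        (mmul (n + m) (H k) (blockP n (Q k) (R' k)))
        (mmul (n + m) (mtr (blockP n (Q k) (R' k))) (H k)).
Proof.
move=> sQ sR [H1 [sH1 HH1]].
pose H k := symmetrizer (tomx n m (Q k)) (tomx m n (R' k)) (tomx n n (H1 k)).
exists (fun k => ofmx (H k)); split.
  exact/smooth_mx_ofmx/smooth_symmetrizer/smooth_mx_tomx/sH1/smooth_mx_tomx/sR/smooth_mx_tomx.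
move=> k Sk; have [[/sym_tomx H1s /pos_def_pdm H1p] [/sym_tomx HMs /pos_def_pdm HMp]] := HH1 k Sk.
rewrite !tomx_mul in HMs HMp.
split; first split.
- exact/tr_sym/symmetrizer_sym.
- exact/pdm_pos_def/symmetrizer_pd.
- apply/mat_eq_tomx; rewrite !tomx_mul tomx_tr ofmxK tomx_blockP.
  exact: symmetrizer_intertwines.
Qed.

Theorem lemma1 (n m : nat) (Q R' : R3 -> mat) :
  (1 <= n)%coq_nat -> (n <= m)%coq_nat ->
  smooth_mat n m Q -> smooth_mat m n R' ->
  (* (a) *)
  (forall k, S2 k ->
     forall (SM : mat) (mu : nat -> R),
       diagonalizes n (mmul m (Q k) (R' k)) SM mu ->
       (forall j, (j < n)%coq_nat -> 0 < mu j) ->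
       exists (SP : mat) (lam : nat -> R),
         diagonalizes (n + m) (blockP n (Q k) (R' k)) SP lam /\
         forall i, (i < n + m)%coq_nat ->
           lam i = 0 \/
           exists j, (j < n)%coq_nat /\ (lam i = sqrt (mu j) \/ lam i = - sqrt (mu j)))
  /\
  (* (b) *)
  ((exists H1 : R3 -> mat,
      smooth_mat n n H1 /\
      forall k, S2 k ->
        sym_pos_def n (H1 k) /\
        sym_pos_def n (mmul n (H1 k) (mmul m (Q k) (R' k)))) ->
   exists H : R3 -> mat,
     smooth_mat (n + m) (n + m) H /\
     forall k, S2 k ->
       sym_pos_def (n + m) (H k) /\
       mat_eq (n + m) (n + m)
         (mmul (n + m) (H k) (blockP n (Q k) (R' k)))
         (mmul (n + m) (mtr (blockP n (Q k) (R' k))) (H k))).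
Proof.
move=> n_pos _ sQ sR; split; last exact: part_b.
by move=> k _ SM mu; apply: part_a.
Qed.
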